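(* Fix a variable layout (numbers $M\ge1$, $N\ge0$, $M_i,N_j\ge0$, assertion variables $a_{i,k}$, $b_{j,k}$ with every $b_{j,k}$ among the $a_{i,k}$). Suppose there are distinct conjunct indices $i_0\ne i_1$ and distinct disjunct indices $j_0\ne j_1$, with disjuncts $j_0,j_1$ non-empty ($N_{j_0},N_{j_1}>0$), such that $\Pi(i_0)\not\ge\Omega(j_0)$, $\Pi(i_0)\ge\Omega(j_1)$, $\Pi(i_1)\ge\Omega(j_0)$ and $\Pi(i_1)\ge\Omega(j_1)$. Then there exist assertions $\varphi_1,\dots,\varphi_M,\psi_1,\dots,\psi_N$ containing no assertion variables such that the implication $\bigwedge_i\varphi_i*a_{i,1}*\cdots*a_{i,M_i}\Rightarrow\bigvee_j\psi_j*b_{j,1}*\cdots*b_{j,N_j}$ holds in the unary interpretation but not in the binary interpretation.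
   Context: $\mathsf{Heap}$: finite partial functions $\mathsf{PosInt}\to\mathsf{Int}$; $g\sqsubseteq h$ means $h$ extends $g$; $h\cdot g$ union of disjoint heaps; componentwise on $\mathsf{Heap}^n$. $\mathsf{IRel}_n$: upward closed subsets of $\mathsf{Heap}^n$; $p*q=\{\mathbf f\cdot\mathbf g\mid\mathbf f\in p,\mathbf g\in q,\text{componentwise disjoint}\}$; $\Delta_n(X)=\{(h_1,\dots,h_n)\mid\exists f\in X.\ \forall k.\ f\sqsubseteq h_k\}$. Assertions: built from primitive assertions $P$ (e.g. $E\hookrightarrow F$), assertion variables, $\mathsf{true},\mathsf{false},\wedge,\vee,*$, quantifiers over integer variables. $n$-ary meaning under $\eta$ and $\rho:\mathsf{AVar}\to\mathsf{IRel}_n$: $[\![P]\!]^n=\Delta_n([\![P]\!]^{\mathrm{prim}}_\eta)$, $[\![a]\!]^n=\rho(a)$, connectives by $\mathsf{Heap}^n,\emptyset,\cap,\cup,*$, quantifiers by unions/intersections. $\varphi\Rightarrow\psi$ holds in the $n$-ary interpretation if $[\![\varphi]\!]^n_{\eta,\rho}\subseteq[\![\psi]\!]^n_{\eta,\rho}$ for all $\eta$ and all $\rho:\mathsf{AVar}\to\mathsf{IRel}_n$; unary means $n=1$, binary $n=2$. $V=\{a_{i,k}\}$; $\Pi(i)(c)=|\{k\mid a_{i,k}=c\}|$, $\Omega(j)(c)=|\{k\mid b_{j,k}=c\}|$ for $c\in V$; $\Pi(i)\ge\Omega(j)$ iff $\Pi(i)(c)\ge\Omega(j)(c)$ for all $c\in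 V$, and $\Pi(i)\not\ge\Omega(j)$ otherwise. *)

From Stdlib Require Import ZArith.
From HB Require Import structures.
From mathcomp Require Import all_boot.
Set Implicit Arguments. Unset Strict Implicit. Unset Printing Implicit Defensive.

Record heap := Heap {
  hfun : positive -> option Z;
  hfin : exists b : positive, forall l, (b < l)%positive -> hfun l = None }.

Definition hsub (g h : heap) : Prop :=
  forall l v, hfun g l = Some v -> hfun h l = Some v.

Definition hdisj (g h : heap) : Prop :=
  forall l, hfun g l = None \/ hfun h l = None.

Definition hunion (f g h : heap) : Prop :=
  hdisj f g /\
  forall l, hfun h l = match hfun f l with Some v => Some v | None => hfun g l end.

Lemma singleton_fin (l : positive) (v : Z) :
  exists b : positive, forall l', (b < l')%positive ->
    (if Pos.eqb l' l then Some v else None) = None.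
Proof.
  exists l; intros l' Hl. destruct (Pos.eqb_spec l' l) as [->|]; [|reflexivity].
  exfalso; exact (Pos.lt_irrefl _ Hl).
Qed.
Definition hsingle (l : positive) (v : Z) : heap :=
  Heap (singleton_fin l v).

Definition htuple (n : nat) := 'I_n -> heap.

Record IRel (n : nat) := MkIRel {
  irel : htuple n -> Prop;
  irel_up : forall h h' : htuple n, irel h -> (forall k, hsub (h k) (h' k)) -> irel h' }.

Definition Delta (n : nat) (X : heap -> Prop) : htuple n -> Prop :=
  fun h => exists f, X f /\ forall k, hsub f (h k).

Definition starR (n : nat) (p q : htuple n -> Prop) : htuple n -> Prop :=
  fun h => exists f g : htuple n, p f /\ q g /\ forall k, hunion (f k) (g k) (h k).

Definition ivar := nat.
Definition avar := nat.

Inductive expr :=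
| EVar of ivar
| EConst of Z
| EAdd of expr & expr
| ESub of expr & expr
| EMul of expr & expr.

Fixpoint eval (eta : ivar -> Z) (e : expr) : Z :=
  match e with
  | EVar x => eta x
  | EConst c => c
  | EAdd e1 e2 => (eval eta e1 + eval eta e2)%Z
  | ESub e1 e2 => (eval eta e1 - eval eta e2)%Z
  | EMul e1 e2 => (eval eta e1 * eval eta e2)%Z
  end.

Inductive prim := PPointsTo of expr & expr.

(* unary (plain) meaning of primitives: [[E ↪ F]] = {[E |-> F]} (empty if E <= 0) *)
Definition sem_prim (eta : ivar -> Z) (P : prim) : heap -> Prop :=
  match P with
  | PPointsTo E F => fun h =>
      (0 < eval eta E)%Z /\ h = hsingle (Z.to_pos (eval eta E)) (eval eta F)
  end.

Inductive assn :=
| APrim of prim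
| AV of avar
| ATrue
| AFalse
| AAnd of assn & assn
| AOr of assn & assn
| AStar of assn & assn
| AEx of ivar & assn
| AAll of ivar & assn.

Fixpoint no_avar (A : assn) : bool :=
  match A with
  | AV _ => false
  | APrim _ | ATrue | AFalse => true
  | AAnd A B | AOr A B | AStar A B => no_avar A && no_avar B
  | AEx _ A | AAll _ A => no_avar A
  end.

Definition upd (eta : ivar -> Z) (x : ivar) (v : Z) : ivar -> Z :=
  fun y => if y == x then v else eta y.

Fixpoint sem (n : nat) (eta : ivar -> Z) (rho : avar -> IRel n) (A : assn)
  : htuple n -> Prop :=
  match A with
  | APrim P => @Delta n (sem_prim eta P)
  | AV a => irel (rho a)
  | ATrue => fun _ => True
  | AFalse => fun _ => False
  | AAnd A B => fun h => sem eta rho A h /\ sem eta rho B h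
  | AOr A B => fun h => sem eta rho A h \/ sem eta rho B h
  | AStar A B => @starR n (sem eta rho A) (sem eta rho B)
  | AEx x A => fun h => exists v : Z, sem (upd eta x v) rho A h
  | AAll x A => fun h => forall v : Z, sem (upd eta x v) rho A h
  end.

Definition valid_n (n : nat) (A B : assn) : Prop :=
  forall (eta : ivar -> Z) (rho : avar -> IRel n) (h : htuple n),
    sem eta rho A h -> sem eta rho B h.

Definition star_vars (phi : assn) (s : seq avar) : assn :=
  foldl (fun acc v => AStar acc (AV v)) phi s.

Fixpoint bigAnd (s : seq assn) : assn :=
  match s with
  | [::] => ATrue
  | [:: x] => x
  | x :: xs => AAnd x (bigAnd xs)
  end.

Fixpoint bigOr (s : seq assn) : assn :=
  match s with
  | [::] => AFalse
  | [:: x] => x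
  | x :: xs => AOr x (bigOr xs)
  end.

Definition lhs (phis : seq assn) (a : seq (seq avar)) : assn :=
  bigAnd [seq star_vars p.1 p.2 | p <- zip phis a].
Definition rhs (psis : seq assn) (b : seq (seq avar)) : assn :=
  bigOr [seq star_vars p.1 p.2 | p <- zip psis b].

Definition Pi_ge_Omega (a b : seq (seq avar)) (i j : nat) : Prop :=
  forall c, c \in flatten a ->
    count_mem c (nth [::] b j) <= count_mem c (nth [::] a i).

From Stdlib Require Import ZArith Lia Classical ClassicalEpsilon.
From mathcomp Require Import all_boot zify.
Set Implicit Arguments. Unset Strict Implicit. Unset Printing Implicit Defensive.

(* Pick a variable c with Π(i0)(c) < Ω(j0)(c), a variable y of b_{j1} whose
   slack sg := Π(i1)(y) - Ω(j1)(y) is minimal, and build every φ_i, ψ_j from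
   points-to cells at locations coded by u < NC; a code is a Q-code when
   u mod 5 < 2 and an R-code otherwise.  φ_{i0} = ψ_{j0} = all R-cells,
   φ_{i1} = all Q-cells, ψ_{j1} = Q-cells plus the sg "S-cells" 10l+4 when
   sg > 0 and Q-cells * (some cell) when sg = 0; other φ_i are true, other
   ψ_j false.
   Unary validity: either the variables missing from a_{i0} for b_{j0} admit
   the empty heap (then ψ_{j0} holds by padding), or one of them has only
   non-empty witnesses, one of which supplies the extra cell for ψ_{j1}; when
   sg > 0 the S-cells come from the frame φ_{i0} and at most sg witnesses of
   a_{i1} meet them.  In both cases b_{j1} is covered by rerouting witnesses.
   Binary failure: in a model where both components hold all cells, ρ(c) and
   ρ(y) are chosen so that every c- or y-witness needs a private cell of a
   kind of which there are too few once the frame of ψ_{j0} (resp. ψ_{j1}) is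
   removed; disjoint witnesses are then counted by pigeonhole. *)

Definition indom (f : heap) (l : positive) : bool :=
  if hfun f l is Some _ then true else false.

Lemma hrestr_fin (h : heap) (P : positive -> bool) :
  exists b : positive, forall l, (b < l)%positive ->
    (if P l then hfun h l else None) = None.
Proof.
  case: (hfin h) => b Hb; exists b => l Hl; case: (P l) => //; exact: Hb.
Qed.
Definition hrestr (h : heap) (P : positive -> bool) : heap :=
  @Heap (fun l => if P l then hfun h l else None) (hrestr_fin h P).

Lemma hemp_fin :
  exists b : positive, forall l, (b < l)%positive -> (fun _ : positive => @None Z) l = None.
Proof. by exists 1%positive. Qed.
Definition hemp : heap := @Heap (fun _ => None) hemp_fin.

Definition hminus (h f : heap) : heap := hrestr h (fun l => ~~ indom f l).

Lemma hsub_trans f g h : hsub f g -> hsub g h -> hsub f h.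
Proof. by move=> H1 H2 l v /H1 /H2. Qed.

Lemma indom_sub (f g : heap) l : hsub f g -> indom f l -> indom g l.
Proof. rewrite /indom => H; case E: (hfun f l) => [v|] //; by rewrite (H _ _ E). Qed.

Lemma hunion_minus (f h : heap) : hsub f h -> hunion f (hminus h f) h.
Proof.
  move=> Hs; split.
  - move=> l; rewrite /hminus /= /indom; case: (hfun f l) => [v|]; [right|left]; by [].
  - move=> l; rewrite /hminus /= /indom; case E: (hfun f l) => [v|] //=.
    by rewrite (Hs l v E).
Qed.

Lemma hsub_minus (g f h : heap) : hsub g h -> hdisj f g -> hsub g (hminus h f).
Proof.
  move=> Hs Hd l v E; rewrite /hminus /= /indom.
  case: (Hd l) => H; first by rewrite H; apply: Hs.
  by rewrite H in E.
Qed.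

Section HeapTuples.
Variable n : nat.
Implicit Types f g h w : htuple n.

Definition tsub f h := forall k, hsub (f k) (h k).
Definition tdisj f g := forall k, hdisj (f k) (g k).
Definition temp : htuple n := fun _ => hemp.
Definition tminus h f : htuple n := fun k => hminus (h k) (f k).

Lemma tsub_refl h : tsub h h. Proof. by move=> k. Qed.
Lemma tsub_trans f g h : tsub f g -> tsub g h -> tsub f h.
Proof. by move=> H1 H2 k; apply: hsub_trans (H1 k) (H2 k). Qed.
Lemma tdisj_sym f g : tdisj f g -> tdisj g f.
Proof. by move=> H k l; case: (H k l); auto. Qed.
Lemma tdisj_sub f f' g : tsub f f' -> tdisj f' g -> tdisj f g.
Proof.
  move=> Hs Hd k l; case: (Hd k l) => H; last by right.
  left; case E: (hfun (f k) l) => [v|] //; by rewrite (Hs k l v E) in H.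
Qed.
Lemma temp_sub h : tsub temp h. Proof. by []. Qed.
Lemma temp_disj h : tdisj temp h. Proof. by move=> k l; left. Qed.

Lemma tminus_disj h w : tdisj (tminus h w) w.
Proof.
  move=> k l; rewrite /tminus /hminus /= /indom.
  case: (hfun (w k) l) => [v|]; [left|right]; by [].
Qed.
Lemma tminus_sub h w : tsub (tminus h w) h.
Proof. by move=> k l v; rewrite /tminus /hminus /=; case: (~~ indom _ _). Qed.
Lemma tsub_minus g w h : tsub g h -> tdisj w g -> tsub g (tminus h w).
Proof. move=> Hs Hd k; apply: hsub_minus; [exact: Hs|exact: Hd]. Qed.

Variables (eta : ivar -> Z) (rho : avar -> IRel n).

Lemma sem_up A h h' : sem eta rho A h -> tsub h h' -> sem eta rho A h'.
Proof.
  elim: A eta h h' => [P|x| | |A IHA B IHB|A IHA B IHB|A IHA B IHB|x A IHA|x A IHA] e h h' /=.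
  - case=> f [Hf Hs] Hh; exists f; split => // k; exact: hsub_trans (Hs k) (Hh k).
  - move=> H Hh; exact: irel_up H Hh.
  - by [].
  - by [].
  - case=> H1 H2 Hh; split; [exact: IHA H1 Hh|exact: IHB H2 Hh].
  - case=> H Hh; [left; exact: IHA H Hh|right; exact: IHB H Hh].
  - case=> f [g [Hf [Hg Hu]]] Hh.
    exists f, (tminus h' f); split => //; split.
    + apply: IHB Hg _ => k l v E.
      case: (Hu k) => Hd Hl.
      have Hfn : hfun (f k) l = None by case: (Hd l) => // H; rewrite H in E.
      rewrite /tminus /hminus /= /indom Hfn /=; apply: (Hh k); by rewrite Hl Hfn.
    + move=> k; apply: hunion_minus => l v E.
      case: (Hu k) => _ Hl; apply: (Hh k); by rewrite Hl E.
  - case=> v H Hh; exists v; exact: IHA H Hh.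
  - move=> H Hh v; exact: IHA (H v) Hh.
Qed.

(* Thanks to upward closure, a separating conjunction holds as soon as
   disjoint witnesses of both sides sit inside the heap. *)
Lemma star_intro A B p q h :
  sem eta rho A p -> sem eta rho B q -> tdisj p q -> tsub p h -> tsub q h ->
  sem eta rho (AStar A B) h.
Proof.
  move=> HA HB Hd Hp Hq; exists p, (tminus h p); split => //; split.
  - apply: sem_up HB _ => k; apply: hsub_minus; [exact: Hq|exact: Hd].
  - move=> k; apply: hunion_minus; exact: Hp.
Qed.

Lemma star_elim A B h :
  sem eta rho (AStar A B) h ->
  exists p q, sem eta rho A p /\ sem eta rho B q /\ tdisj p q /\ tsub p h /\ tsub q h.
Proof.
  case=> p [q [HA [HB Hu]]]; exists p, q; do 3 (split => //).
  - by move=> k; case: (Hu k).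
  - split => k l v E; case: (Hu k) => Hd Hl; rewrite Hl.
    + by rewrite E.
    + by case: (Hd l) => H; [rewrite H|rewrite H in E].
Qed.

End HeapTuples.

Section IteratedStar.
Variables (n : nat) (eta : ivar -> Z) (rho : avar -> IRel n).
Local Notation emp := (@temp n).
Implicit Types (f h : htuple n) (ws : seq (htuple n)).

Definition family (s : seq avar) ws :=
  size ws = size s /\ forall k, k < size s -> irel (rho (nth 0 s k)) (nth emp ws k).
Definition pairwise_disj ws := forall i j, i < size ws -> j < size ws -> i != j ->
  tdisj (nth emp ws i) (nth emp ws j).
Definition disj_from_all f ws := forall k, k < size ws -> tdisj f (nth emp ws k).
Definition all_within ws h := forall k, k < size ws -> tsub (nth emp ws k) h.

Lemma star_vars_rcons phi s x : star_vars phi (rcons s x) = AStar (star_vars phi s) (AV x).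
Proof. by rewrite /star_vars foldl_rcons. Qed.

Lemma nth_rcons_lt ws w k : k < size ws -> nth emp (rcons ws w) k = nth emp ws k.
Proof. by move=> Hk; rewrite nth_rcons Hk. Qed.
Lemma nth_rcons_size ws w : nth emp (rcons ws w) (size ws) = w.
Proof. by rewrite nth_rcons ltnn eqxx. Qed.

Lemma star_vars_intro phi s ws f h :
  sem eta rho phi f -> family s ws -> pairwise_disj ws -> disj_from_all f ws ->
  tsub f h -> all_within ws h ->
  sem eta rho (star_vars phi s) h.
Proof.
  elim/last_ind: s ws f h => [|s x IH] ws f h Hphi [Hsz Hirel] Hpd Had Hf Hws.
    by apply: sem_up Hphi Hf.
  move: Hsz; case/lastP: ws Hpd Had Hws Hirel => [|ws w]; first by rewrite size_rcons.
  rewrite !size_rcons => Hpd Had Hws Hirel [Hsz].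
  have Hlt k : k < size ws -> k < size (rcons ws w) by rewrite size_rcons => /ltnW.
  have Hls : size ws < size (rcons ws w) by rewrite size_rcons.
  (* the last witness w is split off; the others live in h minus w *)
  have Hw : irel (rho x) w.
    by move: (Hirel (size s)); rewrite ltnSn !nth_rcons ltnn eqxx -Hsz ltnn eqxx; apply.
  rewrite star_vars_rcons; apply: (star_intro (p := tminus h w) (q := w)) => //.
  - apply: (IH ws f) => //.
    + split=> // k Hk; have := Hirel k (ltnW Hk); by rewrite !nth_rcons Hsz Hk.
    + move=> i j Hi Hj Hij; have := Hpd i j (Hlt _ Hi) (Hlt _ Hj) Hij.
      by rewrite !nth_rcons_lt.
    + move=> k Hk; have := Had k (Hlt _ Hk); by rewrite nth_rcons_lt.
    + apply: tsub_minus => //; have := Had _ Hls; rewrite nth_rcons_size.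
      exact: tdisj_sym.
    + move=> k Hk; apply: tsub_minus.
      * by have := Hws k (Hlt _ Hk); rewrite nth_rcons_lt.
      * have := Hpd (size ws) k Hls (Hlt _ Hk); rewrite nth_rcons_size nth_rcons_lt //.
        apply; by rewrite neq_ltn Hk orbT.
  - exact: tminus_disj.
  - exact: tminus_sub.
  - by have := Hws _ Hls; rewrite nth_rcons_size.
Qed.

Lemma star_vars_elim phi s h :
  sem eta rho (star_vars phi s) h ->
  exists f ws, sem eta rho phi f /\ family s ws /\ pairwise_disj ws /\
    disj_from_all f ws /\ tsub f h /\ all_within ws h.
Proof.
  elim/last_ind: s h => [|s x IH] h.
    by move=> H; exists h, [::]; do !split => //; exact: tsub_refl.
  rewrite star_vars_rcons => /star_elim [p [q [Hp [Hq [Hd [Hph Hqh]]]]]].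
  case: (IH p Hp) => f [ws [Hphi [[Hsz Hirel] [Hpd [Had [Hfp Hwsp]]]]]].
  (* the new witness is q, disjoint from everything inside p *)
  have Hsplit (P : nat -> Prop) : P (size ws) -> (forall k, k < size ws -> P k) ->
      forall k, k < size (rcons ws q) -> P k.
    move=> Hl Hr k; rewrite size_rcons ltnS leq_eqVlt => /orP [/eqP ->|]; [exact: Hl|exact: Hr].
  exists f, (rcons ws q); do !split => //.
  - by rewrite !size_rcons Hsz.
  - rewrite size_rcons -Hsz -(size_rcons ws q); apply: (Hsplit) => [|k Hk].
    + rewrite nth_rcons_size nth_rcons Hsz ltnn eqxx; exact: Hq.
    + by rewrite nth_rcons_lt // nth_rcons -Hsz Hk; apply: Hirel; rewrite -Hsz.
  - move=> i j Hi Hj; move: i Hi j Hj.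
    apply: (Hsplit) => [|i Hi]; apply: (Hsplit) => [|j Hj]; rewrite ?eqxx // => Hij.
    + rewrite nth_rcons_size nth_rcons_lt //; apply: tdisj_sym; exact: tdisj_sub (Hwsp j Hj) Hd.
    + rewrite nth_rcons_size nth_rcons_lt //; exact: tdisj_sub (Hwsp i Hi) Hd.
    + rewrite !nth_rcons_lt //; exact: Hpd Hij.
  - apply: (Hsplit) => [|k Hk].
    + rewrite nth_rcons_size; exact: tdisj_sub Hfp Hd.
    + rewrite nth_rcons_lt //; exact: Had.
  - exact: tsub_trans Hfp Hph.
  - apply: (Hsplit) => [|k Hk].
    + by rewrite nth_rcons_size.
    + rewrite nth_rcons_lt //; exact: tsub_trans (Hwsp k Hk) Hph.
Qed.

End IteratedStar.

(* Cells: the natural number u codes the location u+1, which always holds 0. *)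
Definition loc (u : nat) : positive := Pos.of_succ_nat u.
Lemma loc_inj u v : loc u = loc v -> u = v.
Proof. exact: SuccNat2Pos.inj. Qed.

Definition cell (u : nat) : assn := APrim (PPointsTo (EConst (Zpos (loc u))) (EConst 0)).
Definition cells (us : seq nat) : assn := foldr (fun u acc => AStar (cell u) acc) ATrue us.
Definition some_cell : assn := AEx 0 (AEx 1 (APrim (PPointsTo (EVar 0) (EVar 1)))).

Lemma no_avar_cells us : no_avar (cells us).
Proof. by elim: us. Qed.

Lemma hsub_single (h : heap) l v : hfun h l = Some v -> hsub (hsingle l v) h.
Proof.
  move=> H l' v'; rewrite /hsingle /=; case: (Pos.eqb_spec l' l) => [->|] //.
  by rewrite H => -[->].
Qed.
Lemma single_sub (h : heap) l v : hsub (hsingle l v) h -> hfun h l = Some v.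
Proof. move=> H; apply: H; by rewrite /hsingle /= Pos.eqb_refl. Qed.

Section CellSemantics.
Variables (n : nat) (eta : ivar -> Z) (rho : avar -> IRel n).
Implicit Types (f h : htuple n).

(* Since primitive assertions are interpreted through Δ_n, a cell holds in a
   tuple iff every component contains it. *)
Lemma cell_intro u h : (forall k, hfun (h k) (loc u) = Some 0%Z) -> sem eta rho (cell u) h.
Proof.
  move=> H; exists (hsingle (loc u) 0); split; first by split.
  move=> k; exact: hsub_single.
Qed.
Lemma cell_elim u h : sem eta rho (cell u) h -> forall k, hfun (h k) (loc u) = Some 0%Z.
Proof. case=> e [[_ ->] H] k; exact: single_sub (H k). Qed.

Lemma cells_elim us f : sem eta rho (cells us) f ->
  forall u, u \in us -> forall k, hfun (f k) (loc u) = Some 0%Z.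
Proof.
  elim: us f => [|u us IH] f //.
  move=> /star_elim [p [q [Hp [Hq [_ [Hpf Hqf]]]]]] u'.
  rewrite in_cons => /orP [/eqP ->|Hu] k.
  - apply: (Hpf k); exact: cell_elim Hp k.
  - apply: (Hqf k); exact: IH Hq u' Hu k.
Qed.

Lemma cells_intro us f : uniq us ->
  (forall u, u \in us -> forall k, hfun (f k) (loc u) = Some 0%Z) -> sem eta rho (cells us) f.
Proof.
  elim: us f => [|u us IH] f //.
  rewrite cons_uniq => /andP [Hnin Huniq] H.
  pose single : htuple n := fun _ => hsingle (loc u) 0.
  have Hsf : tsub single f by move=> k; apply: hsub_single; apply: H; rewrite mem_head.
  apply: (star_intro (p := single) (q := tminus f single)) => //.
  - apply: cell_intro => k; by rewrite /single /hsingle /= Pos.eqb_refl.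
  - apply: IH => // u' Hu' k; rewrite /tminus /hminus /= /indom /single /hsingle /=.
    case: (Pos.eqb_spec (loc u') (loc u)) => [/loc_inj E|_].
    + by move: Hnin; rewrite -E Hu'.
    + apply: H; by rewrite in_cons Hu' orbT.
  - exact: tdisj_sym (tminus_disj _ _).
  - exact: tminus_sub.
Qed.

Lemma some_cell_elim h : sem eta rho some_cell h -> exists l v, forall k, hfun (h k) l = Some v.
Proof.
  case=> v0 [v1 [e [[_ ->] H]]]; exists (Z.to_pos v0), v1 => k.
  have := single_sub (H k); by rewrite /= /upd /=.
Qed.

Lemma some_cell_intro h l v : (forall k, hfun (h k) l = Some v) -> sem eta rho some_cell h.
Proof.
  move=> H; exists (Zpos l), v; exists (hsingle l v); split; first by rewrite /= /upd /=.
  move=> k; exact: hsub_single.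
Qed.

Lemma bigAnd_sem (l : seq assn) h :
  sem eta rho (bigAnd l) h <-> (forall k, k < size l -> sem eta rho (nth ATrue l k) h).
Proof.
  elim: l => [|A l IH] /=; first by split.
  case: l IH => [|B l] IH.
  - split; first by move=> H [|k]. by move=> H; apply: (H 0).
  - split.
    + case=> HA /IH Hl [|k] //= Hk; exact: Hl.
    + move=> H; split; first exact: (H 0). apply/IH => k Hk; exact: (H k.+1).
Qed.

Lemma bigOr_sem (l : seq assn) h :
  sem eta rho (bigOr l) h <-> (exists k, k < size l /\ sem eta rho (nth AFalse l k) h).
Proof.
  elim: l => [|A l IH] /=; first by split => // -[k []].
  case: l IH => [|B l] IH.
  - split; first by move=> H; exists 0. by case=> -[|k] [].
  - split.
    + case=> [HA|/IH [k [Hk Hl]]]; [by exists 0|by exists k.+1].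
    + case=> -[|k] [Hk HA]; [by left|right; apply/IH; by exists k].
Qed.

Lemma nth_zip_map (d : assn) (phis : seq assn) (a : seq (seq avar)) k :
  size phis = size a -> k < size a ->
  nth d [seq star_vars p.1 p.2 | p <- zip phis a] k = star_vars (nth d phis k) (nth [::] a k).
Proof. by move=> Hs Hk; rewrite (nth_map (d, [::])) ?size_zip ?Hs ?minnn // nth_zip. Qed.

Lemma lhs_sem phis a h : size phis = size a ->
  sem eta rho (lhs phis a) h <->
  (forall i, i < size a -> sem eta rho (star_vars (nth ATrue phis i) (nth [::] a i)) h).
Proof.
  move=> Hs; rewrite /lhs bigAnd_sem size_map size_zip Hs minnn.
  by split => H i Hi; move: (H i Hi); rewrite nth_zip_map.
Qed.

Lemma rhs_sem psis b h : size psis = size b ->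
  sem eta rho (rhs psis b) h <->
  (exists j, j < size b /\ sem eta rho (star_vars (nth AFalse psis j) (nth [::] b j)) h).
Proof.
  move=> Hs; rewrite /rhs bigOr_sem size_map size_zip Hs minnn.
  by split => -[j [Hj H]]; exists j; split => //; move: H; rewrite nth_zip_map.
Qed.

End CellSemantics.

Lemma select_positions (s b P : seq nat) : uniq P ->
  (forall x, count_mem x b <= count (fun k => nth 0 s k == x) P) ->
  exists sel, uniq sel /\ {subset sel <= P} /\ map (nth 0 s) sel = b.
Proof.
  elim: b P => [|x b IH] P HP Hc; first by exists [::].
  have : has (fun k => nth 0 s k == x) P.
    by rewrite has_count; apply: leq_trans (Hc x); rewrite /= eqxx.
  case/hasP => k HkP /eqP Hkx.
  have Hcnt p : count p P = p k + count p (rem k P) by rewrite (permP (perm_to_rem HkP)).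
  case: (IH (rem k P)) => [|y|sel [Hu [Hs Hm]]].
  - exact: rem_uniq.
  - move: (Hc y); rewrite Hcnt /= Hkx.
    by case: (eqVneq x y) => [<-|Hxy]; [rewrite leq_add2l|rewrite !add0n].
  - exists (k :: sel); split; [|split].
    + rewrite /= Hu andbT; apply/negP => /Hs; by rewrite mem_rem_uniqF.
    + move=> z; rewrite in_cons => /orP [/eqP ->//|/Hs]; exact: mem_rem.
    + by rewrite /= Hkx Hm.
Qed.

Lemma count_iota_nth (s : seq nat) (p : pred nat) :
  count (fun k => p (nth 0 s k)) (iota 0 (size s)) = count p s.
Proof. by rewrite -[in RHS](mkseq_nth 0 s) /mkseq count_map. Qed.

Lemma count_andC (l : seq nat) (p q : pred nat) :
  count p l <= count (fun k => p k && q k) l + count (fun k => ~~ q k) l.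
Proof. elim: l => [|x l IH] //=; case: (p x); case: (q x) => /=; lia. Qed.

Lemma size_nth_flatten (s : seq (seq nat)) i : size (nth [::] s i) <= size (flatten s).
Proof.
  elim: s i => [|x s IH] [|i] //=; rewrite size_cat; first exact: leq_addr.
  exact: leq_trans (IH i) (leq_addl _ _).
Qed.

Lemma pigeonhole (P : seq nat) (R : nat -> nat -> Prop) (lo len : nat) : uniq P ->
  (forall k, k \in P -> exists t, lo <= t < lo + len /\ R k t) ->
  (forall k1 k2 t, k1 \in P -> k2 \in P -> R k1 t -> R k2 t -> k1 = k2) ->
  size P <= len.
Proof.
  move=> HP Hex Hinj.
  pose slot k := epsilon (inhabits 0) (fun t => k \in P -> lo <= t < lo + len /\ R k t).
  have Hslot k : k \in P -> lo <= slot k < lo + len /\ R k (slot k).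
    move=> Hk; apply: (epsilon_spec (inhabits 0) (fun t => k \in P -> lo <= t < lo + len /\ R k t)) => //.
    case: (Hex k Hk) => t Ht; by exists t.
  rewrite -(size_map slot) -(size_iota lo len); apply: uniq_leq_size.
  - rewrite map_inj_in_uniq // => k1 k2 H1 H2 E.
    apply: (Hinj k1 k2 (slot k1)) => //; [exact: (Hslot k1 H1).2|rewrite E; exact: (Hslot k2 H2).2].
  - move=> t /mapP [k Hk ->]; rewrite mem_iota; exact: (Hslot k Hk).1.
Qed.

Lemma seq_argmin (s : seq nat) (f : nat -> nat) : s != [::] ->
  exists2 y, y \in s & forall x, x \in s -> f y <= f x.
Proof.
  case: s => [|z s] // _.
  have Hex : exists m, has (fun x => f x == m) (z :: s) by exists (f z); rewrite /= eqxx.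
  case: (ex_minnP Hex) => m /hasP [y Hy /eqP <-] Hmin.
  exists y => // x Hx; apply: Hmin; apply/hasP; by exists x.
Qed.

Definition occ (s : seq nat) (k : nat) := count (fun k' => nth 0 s k' == nth 0 s k) (iota 0 k).

Lemma occ_lt_count (s : seq nat) k1 k2 : k1 < k2 ->
  occ s k1 < count (fun k' => nth 0 s k' == nth 0 s k1) (iota 0 k2).
Proof.
  move=> Hlt; rewrite /occ -(subnKC (ltnW Hlt)) iotaD count_cat add0n.
  by rewrite -[X in X < _]addn0 ltn_add2l -(subnSK Hlt) /= eqxx.
Qed.

Lemma occ_lt (s : seq nat) k : k < size s -> occ s k < count_mem (nth 0 s k) s.
Proof. by move=> Hk; rewrite -count_iota_nth; apply: occ_lt_count. Qed.

Lemma occ_inj (s : seq nat) k1 k2 : nth 0 s k1 = nth 0 s k2 -> occ s k1 = occ s k2 -> k1 = k2.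
Proof.
  move=> Heq Ho; case: (ltngtP k1 k2) => // H.
  - by move: (occ_lt_count s H); rewrite Heq -/(occ s k2) -Ho ltnn.
  - by move: (occ_lt_count s H); rewrite -Heq -/(occ s k1) Ho ltnn.
Qed.

Definition pos (s : seq nat) (x : nat) := [seq k <- iota 0 (size s) | nth 0 s k == x].
Lemma size_pos s x : size (pos s x) = count_mem x s.
Proof. by rewrite size_filter -(count_iota_nth s (pred1 x)). Qed.
Lemma pos_uniq s x : uniq (pos s x).
Proof. apply: filter_uniq; exact: iota_uniq. Qed.
Lemma mem_pos s x k : (k \in pos s x) = (k < size s) && (nth 0 s k == x).
Proof. by rewrite mem_filter mem_iota add0n andbC. Qed.

Lemma count_avoid (s : seq nat) (bad : pred nat) x :
  count_mem x s - count bad (iota 0 (size s)) <=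
  count (fun k => (nth 0 s k == x) && ~~ bad k) (iota 0 (size s)).
Proof.
  have := count_andC (iota 0 (size s)) (fun k => nth 0 s k == x) (fun k => ~~ bad k).
  have -> : count (fun k => ~~ ~~ bad k) (iota 0 (size s)) = count bad (iota 0 (size s)).
    by apply: eq_count => k; rewrite negbK.
  by rewrite (@count_iota_nth s (pred1 x)) leq_subLR addnC.
Qed.

Section Reroute.
Variables (n : nat) (eta : ivar -> Z) (rho : avar -> IRel n).
Local Notation emp := (@temp n).

Definition rest (h : htuple n) (ws : seq (htuple n)) (sel : seq nat) : htuple n :=
  fun k => hrestr (h k) (fun l => ~~ has (fun j => indom (nth emp ws j k) l) sel).

Lemma rest_sub h ws sel : tsub (rest h ws sel) h.
Proof. by move=> k l v; rewrite /rest /=; case: (~~ _). Qed.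

Lemma rest_keep h ws sel g : tsub g h -> (forall j, j \in sel -> tdisj (nth emp ws j) g) ->
  tsub g (rest h ws sel).
Proof.
  move=> Hs Hd k l v E; rewrite /rest /=.
  case Hh: (has _ _); last by apply: (Hs k).
  case/hasP: Hh => j Hj; rewrite /indom.
  case: (Hd j Hj k l) => H; first by rewrite H.
  by rewrite H in E.
Qed.

Lemma rest_disj h ws sel j : j \in sel -> tdisj (rest h ws sel) (nth emp ws j).
Proof.
  move=> Hj k l; rewrite /rest /=.
  case Hh: (has _ _) => /=; first by left.
  right; move/hasPn: Hh => /(_ j Hj); rewrite /indom; by case: (hfun _ _).
Qed.

Lemma reroute h (s : seq avar) ws (b : seq avar) psi (sel : seq nat) :
  family rho s ws -> pairwise_disj ws -> all_within ws h ->
  uniq sel -> (forall k, k \in sel -> k < size s) -> map (nth 0 s) sel = b ->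
  sem eta rho psi (rest h ws sel) -> sem eta rho (star_vars psi b) h.
Proof.
  move=> [Hsz Hirel] Hpd Hws Hu Hlt Hmap Hpsi.
  have Hselk k : k < size sel -> nth 0 sel k < size s by move=> Hk; apply: Hlt; exact: mem_nth.
  apply: (star_vars_intro (ws := map (nth emp ws) sel) Hpsi).
  - split; first by rewrite size_map -Hmap size_map.
    move=> k; rewrite -{1}Hmap size_map => Hk.
    rewrite -Hmap !(nth_map 0) //; apply: Hirel; exact: Hselk.
  - move=> i j; rewrite size_map => Hi Hj Hij; rewrite !(nth_map 0) //.
    by apply: Hpd; rewrite ?Hsz ?Hselk ?nth_uniq.
  - move=> k; rewrite size_map => Hk; rewrite (nth_map 0) //; apply: rest_disj; exact: mem_nth.
  - exact: rest_sub.
  - move=> k; rewrite size_map => Hk; rewrite (nth_map 0) //; apply: Hws; rewrite Hsz; exact: Hselk.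
Qed.

End Reroute.

Lemma reroute_admissible n eta (rho : avar -> IRel n) h (s : seq avar) ws b psi
    (ok : pred nat) :
  family rho s ws -> pairwise_disj ws -> all_within ws h ->
  (forall x, count_mem x b <= count (fun k => (nth 0 s k == x) && ok k) (iota 0 (size s))) ->
  (forall sel, (forall k, k \in sel -> (k < size s) && ok k) -> sem eta rho psi (rest h ws sel)) ->
  sem eta rho (star_vars psi b) h.
Proof.
  move=> Hfam Hpd Hws Hcnt Hpsi.
  pose P := [seq k <- iota 0 (size s) | ok k].
  have HP k : (k \in P) = (k < size s) && ok k by rewrite mem_filter mem_iota add0n andbC.
  case: (@select_positions s b P) => [|x|sel [Hu [Hsub Hmap]]].
  - apply: filter_uniq; exact: iota_uniq.
  - rewrite count_filter; apply: leq_trans (Hcnt x) (eq_leq _).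
    by apply: eq_count => k; rewrite /= andbC.
  - apply: (reroute Hfam Hpd Hws Hu) => //.
    + by move=> k /Hsub; rewrite HP => /andP [].
    + apply: Hpsi => k /Hsub; by rewrite HP.
Qed.

Lemma star_vars_pad n eta (rho : avar -> IRel n) phi (s b : seq avar) h :
  (forall x, count_mem x s < count_mem x b -> irel (rho x) (@temp n)) ->
  sem eta rho (star_vars phi s) h -> sem eta rho (star_vars phi b) h.
Proof.
  move=> Hemp /star_vars_elim [f [ws [Hf [[Hsz Hirel] [Hpd [Had [Hfh Hws]]]]]]].
  pose E := [seq x <- b | count_mem x s < count_mem x b].
  pose ws' := ws ++ nseq (size E) (@temp n).
  have Hnth k : nth (@temp n) ws' k = if k < size s then nth (@temp n) ws k else @temp n.
    rewrite /ws' nth_cat Hsz; case: ifP => // _; by rewrite nth_nseq; case: ifP.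
  apply: (@reroute_admissible n eta rho h (s ++ E) ws' b phi predT).
  - split; first by rewrite /ws' !size_cat size_nseq Hsz.
    move=> k Hk; rewrite Hnth nth_cat; case: ifP => Hks; first exact: Hirel.
    apply: Hemp; have : nth 0 E (k - size s) \in E.
      have Hks' : size s <= k by rewrite leqNgt Hks.
      by apply: mem_nth; rewrite ltn_subLR // -size_cat.
    by rewrite mem_filter => /andP [].
  - move=> i j Hi Hj Hij; rewrite !Hnth.
    case: ifP => Hi0; case: ifP => Hj0; try exact: temp_disj; last exact: tdisj_sym (temp_disj _).
    by apply: Hpd; rewrite ?Hsz.
  - move=> k _; rewrite Hnth; case: ifP => Hk; [apply: Hws; by rewrite Hsz|exact: temp_sub].
  - move=> x; rewrite (eq_count (a2 := fun k => nth 0 (s ++ E) k == x)); last by move=> k; rewrite andbT.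
    rewrite (@count_iota_nth (s ++ E) (pred1 x)) count_cat /E count_filter.
    case Hx: (count_mem x s < count_mem x b).
    + apply: leq_trans (leq_addl _ _); apply: eq_leq; apply: eq_count => y /=.
      by case: (eqVneq y x) => [->|]; rewrite ?Hx.
    + by apply: leq_trans (leq_addr _ _); rewrite leqNgt Hx.
  - move=> sel _; apply: sem_up Hf _; apply: rest_keep => // j _ k l.
    rewrite Hnth; case: ifP => Hj; last by left.
    have Hj' : j < size ws by rewrite Hsz.
    by case: (Had j Hj' k l); [right|left].
Qed.

Lemma disjoint_touching n (ws : seq (htuple n)) (k0 : 'I_n) (us P : seq nat) :
  uniq P -> (forall k, k \in P -> k < size ws) -> pairwise_disj ws ->
  (forall k, k \in P -> has (fun u => indom (nth (@temp n) ws k k0) (loc u)) us) ->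
  size P <= size us.
Proof.
  move=> HP Hsz Hpd Htouch.
  apply: (@pigeonhole P (fun k t => indom (nth (@temp n) ws k k0) (loc (nth 0 us t))) 0) => //.
  - move=> k /Htouch /hasP [u Hu Hin]; exists (index u us).
    by rewrite add0n index_mem Hu nth_index.
  - move=> k1 k2 t H1 H2 E1 E2; apply/eqP/negPn/negP => Hne.
    have := Hpd k1 k2 (Hsz _ H1) (Hsz _ H2) Hne k0 (loc (nth 0 us t)).
    by move: E1 E2; rewrite /indom; case: (hfun _ _) => // v1 _; case: (hfun _ _) => // v2 _ [].
Qed.

Definition NC (a : seq (seq avar)) := 10 * (size (flatten a) + 2).
Definition Qp : pred nat := fun u => u %% 5 < 2.
Definition Rp : pred nat := fun u => 2 <= u %% 5.
Definition Qcodes a := [seq u <- iota 0 (NC a) | Qp u].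
Definition Rcodes a := [seq u <- iota 0 (NC a) | Rp u].
Definition Scodes (sg : nat) := [seq 10 * l + 4 | l <- iota 0 sg].

Definition phi_i0 a := cells (Rcodes a).
Definition phi_i1 a := cells (Qcodes a).
Definition psi_j1 a sg :=
  if 0 < sg then cells (Qcodes a ++ Scodes sg) else AStar (cells (Qcodes a)) some_cell.

Definition mkphis (a : seq (seq avar)) i0 i1 :=
  [seq (if i == i0 then phi_i0 a else if i == i1 then phi_i1 a else ATrue) | i <- iota 0 (size a)].
Definition mkpsis (a b : seq (seq avar)) j0 j1 sg :=
  [seq (if j == j0 then phi_i0 a else if j == j1 then psi_j1 a sg else AFalse)
  | j <- iota 0 (size b)].

Lemma nth_map_iota (T : Type) (d : T) (f : nat -> T) n i : i < n -> nth d (map f (iota 0 n)) i = f i.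
Proof. by move=> Hi; rewrite (nth_map 0) ?size_iota // nth_iota. Qed.

Lemma size_mkphis a i0 i1 : size (mkphis a i0 i1) = size a.
Proof. by rewrite size_map size_iota. Qed.
Lemma size_mkpsis a b j0 j1 sg : size (mkpsis a b j0 j1 sg) = size b.
Proof. by rewrite size_map size_iota. Qed.

Lemma no_avar_mkphis a i0 i1 : all no_avar (mkphis a i0 i1).
Proof.
  rewrite all_map; apply/allP => i _ /=.
  by case: (i == i0); [|case: (i == i1)]; rewrite ?no_avar_cells.
Qed.
Lemma no_avar_mkpsis a b j0 j1 sg : all no_avar (mkpsis a b j0 j1 sg).
Proof.
  rewrite all_map; apply/allP => j _ /=.
  case: (j == j0); first exact: no_avar_cells.
  by case: (j == j1) => //; rewrite /psi_j1; case: (0 < sg); rewrite /= no_avar_cells.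
Qed.

Lemma mem_Qcodes a u : (u \in Qcodes a) = Qp u && (u < NC a).
Proof. by rewrite mem_filter mem_iota add0n. Qed.
Lemma mem_Rcodes a u : (u \in Rcodes a) = Rp u && (u < NC a).
Proof. by rewrite mem_filter mem_iota add0n. Qed.
Lemma mem_Scodes sg u : u \in Scodes sg -> exists2 l, l < sg & u = 10 * l + 4.
Proof. by case/mapP => l; rewrite mem_iota add0n => /andP [_ Hl] ->; exists l. Qed.
Lemma size_Scodes sg : size (Scodes sg) = sg.
Proof. by rewrite size_map size_iota. Qed.

Lemma Scodes_R a sg u : sg <= size (flatten a) -> u \in Scodes sg -> u \in Rcodes a.
Proof. move=> Hsg /mem_Scodes [l Hl ->]; rewrite mem_Rcodes /Rp /NC; apply/andP; split; lia. Qed.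

Lemma uniq_QS a sg : uniq (Qcodes a ++ Scodes sg).
Proof.
  rewrite cat_uniq; apply/and3P; split.
  - apply: filter_uniq; exact: iota_uniq.
  - apply/hasPn => u /mem_Scodes [l _ ->]; rewrite mem_Qcodes /Qp; apply/negP => /andP [H _]; lia.
  - rewrite map_inj_uniq ?iota_uniq // => x y; lia.
Qed.
Lemma uniq_R a : uniq (Rcodes a).
Proof. apply: filter_uniq; exact: iota_uniq. Qed.
Lemma uniq_Q a : uniq (Qcodes a).
Proof. apply: filter_uniq; exact: iota_uniq. Qed.

Lemma nonempty_witness (rho : avar -> IRel 1) x (w : htuple 1) :
  irel (rho x) w -> ~ irel (rho x) (@temp 1) -> exists l v, hfun (w ord0) l = Some v.
Proof.
  move=> Hw Hne; apply: NNPP => Hno; apply: Hne; apply: (irel_up Hw) => k l v.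
  rewrite (ord1 k) => E; exfalso; apply: Hno; by exists l, v.
Qed.

Section Unary.
Variables (a b : seq (seq avar)) (i0 i1 j0 j1 : nat).
Variables (eta : ivar -> Z) (rho : avar -> IRel 1) (h : htuple 1).
Local Notation A0 := (nth [::] a i0).
Local Notation A1 := (nth [::] a i1).
Local Notation B0 := (nth [::] b j0).
Local Notation B1 := (nth [::] b j1).
Local Notation emp := (@temp 1).

Hypothesis Hlay : forall j, j < size b -> forall x, x \in nth [::] b j -> x \in flatten a.
Hypothesis Hj0 : j0 < size b.
Hypothesis Hj1 : j1 < size b.
Hypothesis H01 : Pi_ge_Omega a b i0 j1.
Hypothesis H10 : Pi_ge_Omega a b i1 j0.
Hypothesis H11 : Pi_ge_Omega a b i1 j1.
Hypothesis Hi0 : sem eta rho (star_vars (phi_i0 a) A0) h.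
Hypothesis Hi1 : sem eta rho (star_vars (phi_i1 a) A1) h.

(* Positive slack sg: the S-cells are R-cells, hence present in h; at most sg
   witnesses of A1 meet them, and the remaining ones still cover B1. *)
Lemma unary_slack sg : 0 < sg -> sg <= size (flatten a) ->
  (forall x, x \in B1 -> sg <= count_mem x A1 - count_mem x B1) ->
  sem eta rho (star_vars (cells (Qcodes a ++ Scodes sg)) B1) h.
Proof.
  move=> Hsg0 Hsgb Hslack.
  have HS u : u \in Scodes sg -> hfun (h ord0) (loc u) = Some 0%Z.
    case/star_vars_elim: Hi0 => f0 [_ [Hf0 [_ [_ [_ [Hf0h _]]]]]] Hu.
    apply: (Hf0h ord0); apply: (cells_elim Hf0); exact: Scodes_R Hu.
  case/star_vars_elim: Hi1 => f1 [ws [Hf1 [Hfam [Hpd [Had [Hf1h Hws]]]]]].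
  have [Hsz _] := Hfam.
  pose touch k := has (fun u => indom (nth emp ws k ord0) (loc u)) (Scodes sg).
  have Htouch : count touch (iota 0 (size A1)) <= sg.
    rewrite -size_filter -(size_Scodes sg); apply: (@disjoint_touching 1 ws ord0) => //.
    - apply: filter_uniq; exact: iota_uniq.
    - by move=> k; rewrite mem_filter mem_iota Hsz => /andP [].
    - by move=> k; rewrite mem_filter => /andP [].
  apply: (reroute_admissible (ok := fun k => ~~ touch k) Hfam Hpd Hws).
  - move=> x; apply: leq_trans (count_avoid A1 touch x).
    case Hx: (x \in B1); last by rewrite (count_memPn (negbT Hx)).
    apply: leq_trans (leq_sub2l _ Htouch); have Hs := Hslack x Hx.
    rewrite leq_subCr //; [exact: leq_trans Hs (leq_subr _ _)|exact: H11 (Hlay Hj1 Hx)].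
  - move=> sel Hsel; apply: cells_intro; first exact: uniq_QS.
    move=> u Hu k; rewrite (ord1 k) /rest /=.
    have -> : has (fun j => indom (nth emp ws j ord0) (loc u)) sel = false.
      apply/hasPn => j /Hsel /andP [Hj Htj].
      move: Hu; rewrite mem_cat => /orP [HQ|HSu]; last by move/hasPn: Htj => /(_ u HSu).
      have := Had j; rewrite Hsz => /(_ Hj ord0 (loc u)).
      by rewrite (cells_elim Hf1 HQ ord0) /indom; case=> // ->.
    rewrite /=; move: Hu; rewrite mem_cat => /orP [HQ|/HS //].
    apply: (Hf1h ord0); exact: (cells_elim Hf1 HQ ord0).
Qed.

(* A variable d needed more often in B0 than A0 provides, whose witnesses are
   all non-empty: then B1 is covered by A1 minus one d-witness, whose
   non-empty content supplies [some_cell]. *)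
Lemma unary_deficit d : count_mem d A0 < count_mem d B0 -> ~ irel (rho d) emp ->
  sem eta rho (star_vars (AStar (cells (Qcodes a)) some_cell) B1) h.
Proof.
  move=> Hdef Hnot.
  have Hda : d \in flatten a.
    by apply: (Hlay Hj0); rewrite -has_pred1 has_count; apply: leq_ltn_trans Hdef.
  have Hd10 := H10 Hda; have Hd01 := H01 Hda.
  case/star_vars_elim: Hi1 => f1 [ws [Hf1 [Hfam [Hpd [Had [Hf1h Hws]]]]]].
  have [Hsz Hirel] := Hfam.
  pose p := index d A1.
  have Hp : p < size A1 by rewrite index_mem -has_pred1 has_count; lia.
  have Hnp : nth 0 A1 p = d by rewrite nth_index // -has_pred1 has_count; lia.
  have Hp' : p < size ws by rewrite Hsz.
  apply: (reroute_admissible (ok := fun k => k != p) Hfam Hpd Hws).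
  - move=> x; case: (eqVneq x d) => [->|Hxd].
    + apply: leq_trans (count_avoid A1 (pred1 p) d).
      rewrite (count_uniq_mem _ (iota_uniq _ _)) mem_iota add0n Hp; lia.
    + rewrite (eq_count (a2 := fun k => nth 0 A1 k == x)); last first.
        move=> k /=; case: (eqVneq k p) => [->|_]; last by rewrite andbT.
        by rewrite Hnp andbF eq_sym (negbTE Hxd).
      rewrite (@count_iota_nth A1 (pred1 x)).
      case Hx: (x \in B1); first exact: H11 (Hlay Hj1 Hx).
      by rewrite (count_memPn (negbT Hx)).
  - move=> sel Hsel.
    have Hnot' : ~ irel (rho (nth 0 A1 p)) emp by rewrite Hnp.
    have [l [v Hlv]] := nonempty_witness (Hirel p Hp) Hnot'.
    have Hsel_lt j : j \in sel -> j < size ws /\ j != p.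
      by move/Hsel => /andP [Hj ->]; rewrite Hsz.
    apply: (star_intro (p := f1) (q := nth emp ws p)) => //.
    + apply: some_cell_intro => k; rewrite (ord1 k); exact: Hlv.
    + exact: Had.
    + apply: rest_keep => // j /Hsel_lt [Hj _]; apply: tdisj_sym; exact: Had.
    + apply: rest_keep; first exact: Hws.
      by move=> j /Hsel_lt [Hj Hjp]; apply: Hpd.
Qed.

End Unary.

Lemma to_nat_loc u : (Pos.to_nat (loc u)).-1 = u.
Proof. by rewrite /loc SuccNat2Pos.id_succ. Qed.

Lemma loc_pred (l : positive) : loc (Pos.to_nat l).-1 = l.
Proof.
  rewrite /loc; apply: SuccNat2Pos.inv; rewrite prednK //.
  by have /ltP := Pos2Nat.is_pos l.
Qed.

Definition o1 : 'I_2 := @Ordinal 2 1 isT.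
Lemma ord2_cases (k : 'I_2) : k = ord0 \/ k = o1.
Proof. case: k => [[|[|m]] Hm]; [left|right|]; try exact: val_inj; by []. Qed.

Lemma tdisj_indom n (g w : htuple n) k l : tdisj g w -> indom (g k) l -> ~~ indom (w k) l.
Proof. by move=> Hd; rewrite /indom; case: (Hd k l) => ->; case: (hfun _ _). Qed.

Section TwoComponentCells.
Variable N : nat.

Lemma cellsN_fin (P : pred nat) : exists b : positive, forall l, (b < l)%positive ->
  (if P (Pos.to_nat l).-1 && ((Pos.to_nat l).-1 < N) then Some 0%Z else None) = None.
Proof.
  exists (Pos.of_succ_nat N) => l Hl.
  have H : N < (Pos.to_nat l).-1.
    move/Pos2Nat.inj_lt: Hl; rewrite SuccNat2Pos.id_succ; move/ltP.
    have := Pos2Nat.is_pos l; move/ltP; lia.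
  by rewrite ltnNge (ltnW H) andbF.
Qed.

Definition cellsN (P : pred nat) : heap :=
  @Heap (fun l => if P (Pos.to_nat l).-1 && ((Pos.to_nat l).-1 < N) then Some 0%Z else None)
        (cellsN_fin P).

Definition tp2 (P0 P1 : pred nat) : htuple 2 :=
  fun k => if nat_of_ord k == 0 then cellsN P0 else cellsN P1.

Lemma tp2_loc (P0 P1 : pred nat) k u : hfun (tp2 P0 P1 k) (loc u) =
  if (if k == ord0 then P0 u else P1 u) && (u < N) then Some 0%Z else None.
Proof. by case: (ord2_cases k) => ->; rewrite /= to_nat_loc. Qed.

Lemma indom_tp2_0 (P0 P1 : pred nat) u : indom (tp2 P0 P1 ord0) (loc u) = P0 u && (u < N).
Proof. by rewrite /indom tp2_loc; case: (P0 u && (u < N)). Qed.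
Lemma indom_tp2_1 (P0 P1 : pred nat) u : indom (tp2 P0 P1 o1) (loc u) = P1 u && (u < N).
Proof. by rewrite /indom tp2_loc; case: (P1 u && (u < N)). Qed.

Lemma cellsN_sub (P Q : pred nat) : (forall u, u < N -> P u -> Q u) -> hsub (cellsN P) (cellsN Q).
Proof.
  move=> H l v; rewrite /=; move: (Pos.to_nat l).-1 => u.
  case HP: (P u); case Hl: (u < N) => //= E.
  by rewrite (H u Hl HP).
Qed.
Lemma tp2_sub (P0 P1 Q0 Q1 : pred nat) : (forall u, u < N -> P0 u -> Q0 u) ->
  (forall u, u < N -> P1 u -> Q1 u) -> tsub (tp2 P0 P1) (tp2 Q0 Q1).
Proof. move=> H0 H1 k; case: (ord2_cases k) => ->; exact: cellsN_sub. Qed.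

Lemma cellsN_disj (P Q : pred nat) : (forall u, u < N -> P u -> Q u -> False) ->
  hdisj (cellsN P) (cellsN Q).
Proof.
  move=> H l; rewrite /=; move: (Pos.to_nat l).-1 => u.
  case HP: (P u); case HQ: (Q u); rewrite /=; try by [left|right].
  case Hl: (u < N); [exfalso; exact: H Hl HP HQ|by left].
Qed.
Lemma tp2_disj (P0 P1 Q0 Q1 : pred nat) : (forall u, u < N -> P0 u -> Q0 u -> False) ->
  (forall u, u < N -> P1 u -> Q1 u -> False) -> tdisj (tp2 P0 P1) (tp2 Q0 Q1).
Proof. move=> H0 H1 k; case: (ord2_cases k) => ->; exact: cellsN_disj. Qed.

Definition hM : htuple 2 := tp2 predT predT.

Lemma dom_hM (w : htuple 2) k u : tsub w hM -> indom (w k) (loc u) -> u < N.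
Proof.
  move=> Hs; rewrite /indom; case E: (hfun _ _) => [v|] // _.
  by move: (Hs k _ _ E); rewrite tp2_loc; case: (u < N); rewrite ?andbF.
Qed.

Lemma dom_hM_loc (w : htuple 2) k l : tsub w hM -> indom (w k) l -> exists2 u, u < N & l = loc u.
Proof.
  move=> Hs Hl; exists (Pos.to_nat l).-1; last by rewrite loc_pred.
  apply: (dom_hM (k := k) Hs); by rewrite loc_pred.
Qed.

End TwoComponentCells.

(* The binary countermodel, for a variable c with Π(i0)(c) < Ω(j0)(c), a
   variable y and the slack sg := Π(i1)(y) - Ω(j1)(y).  The q-th witness of
   variable x in a conjunct is given the "track" t = 2q + bx x and its cells are
   the codes 5t + r, r < 5 (r < 2: Q-codes, r >= 2: R-codes):
   - in conjunct i0: the Q-cell 5t in component 0;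
   - in conjunct i1, for x = c <> y and for x = y with q > sg: the R-cell 5t+3
     in component 0; for x = y and q < sg: the S-cell 5t+4 = 10q+4 in
     component 0; for x = y and q = sg: only component 1 is used, with the
     S-cell 4 if sg > 0 and all R-cells if sg = 0;
   - in the other conjuncts: the Q-cell 5t+1 and the R-cell 5t+2.
   ρ(y) and ρ(c) are upward-closed relations (Mem) containing these
   witnesses; the other variables are interpreted by all heap pairs. *)
Section BinaryModel.
Variables (a : seq (seq avar)) (i0 i1 c y sg : nat).
Local Notation N := (NC a).
Local Notation A i := (nth [::] a i).
Local Notation emp := (@temp 2).

Definition bx (x : nat) := if x == y then 0 else 1.
Definition track (x q : nat) := 2 * q + bx x.

Definition W0 (i k : nat) : pred nat := fun u =>
  let x := nth 0 (A i) k in let q := occ (A i) k in let t := track x q in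
  if i == i1 then
    (if x == y then (if q < sg then u == 5 * t + 4 else if q == sg then false else u == 5 * t + 3)
     else if x == c then u == 5 * t + 3 else false)
  else if (x == y) || (x == c) then
    (if i == i0 then u == 5 * t else (u == 5 * t + 1) || (u == 5 * t + 2))
  else false.

Definition W1 (i k : nat) : pred nat := fun u =>
  [&& i == i1, nth 0 (A i) k == y, occ (A i) k == sg & (if 0 < sg then u == 4 else Rp u)].

Definition wit (i k : nat) : htuple 2 := tp2 N (W0 i k) (W1 i k).

Definition frame (i : nat) : htuple 2 :=
  if i == i0 then tp2 N Rp Rp else if i == i1 then tp2 N Qp Qp else tp2 N pred0 pred0.

Definition Mem (x : nat) (w : htuple 2) : Prop :=
  (exists t, t < count_mem x (A i0) /\ indom (w ord0) (loc (5 * track x t))) \/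
  (exists t, indom (w ord0) (loc (5 * track x t + 1)) /\ indom (w ord0) (loc (5 * track x t + 2))) \/
  (exists q, q < count_mem x (A i1) /\ ~~ ((x == y) && (q <= sg)) /\
             indom (w ord0) (loc (5 * track x q + 3))) \/
  ((x == y) /\ (if 0 < sg then (exists q, q < sg /\ indom (w ord0) (loc (10 * q + 4))) \/
                               indom (w o1) (loc 4)
                else (forall u, u < N -> Rp u -> indom (w o1) (loc u)))).

Lemma Mem_up x (w w' : htuple 2) : Mem x w -> tsub w w' -> Mem x w'.
Proof.
  move=> H Hs; have I0 l := @indom_sub _ _ l (Hs ord0); have I1 l := @indom_sub _ _ l (Hs o1).
  case: H => [[t [Ht H]]|[[t [H1 H2]]|[[q [Hq [Hn H]]]|[Hy H]]]].
  - left; exists t; split => //; exact: I0.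
  - right; left; exists t; split; exact: I0.
  - right; right; left; exists q; do 2 split => //; exact: I0.
  - right; right; right; split => //; case: (0 < sg) H => [[[q [Hq H]]|H]|H].
    + left; exists q; split => //; exact: I0.
    + right; exact: I1.
    + move=> u Hu Hr; exact: I1 (H u Hu Hr).
Qed.

Definition relMem x : IRel 2 := @MkIRel 2 (Mem x) (@Mem_up x).
Definition relTop : IRel 2 := @MkIRel 2 (fun _ => True) (fun _ _ H _ => H).
Definition rho2 (x : avar) : IRel 2 := if (x == y) || (x == c) then relMem x else relTop.

Lemma bx_le x : bx x <= 1.
Proof. rewrite /bx; by case: (x == y). Qed.

Lemma W0_code i k u : W0 i k u ->
  ((nth 0 (A i) k == y) || (nth 0 (A i) k == c)) /\
  u %/ 5 = track (nth 0 (A i) k) (occ (A i) k).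
Proof.
  rewrite /W0; set x := nth 0 (A i) k; set q := occ (A i) k; set t := track x q.
  case: (i == i1).
  - case: (eqVneq x y) => Hxy /=.
    + case: (q < sg); first by move/eqP ->; lia.
      case: (q == sg) => //; by move/eqP ->; lia.
    + case: (eqVneq x c) => // _ /eqP ->; lia.
  - case Hyc: ((x == y) || (x == c)) => //.
    by case: (i == i0) => [/eqP ->|/orP [/eqP ->|/eqP ->]]; split => //; lia.
Qed.

Lemma W0_inj i k1 k2 u : W0 i k1 u -> W0 i k2 u -> k1 = k2.
Proof.
  move=> /W0_code [H1 E1] /W0_code [H2 E2].
  move: E1; rewrite E2 /track => E.
  have Hb1 := bx_le (nth 0 (A i) k1); have Hb2 := bx_le (nth 0 (A i) k2).
  have Eo : occ (A i) k1 = occ (A i) k2 by lia.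
  have Eb : bx (nth 0 (A i) k2) = bx (nth 0 (A i) k1) by lia.
  apply: (occ_inj (s := A i)) => //.
  move: Eb H1 H2; rewrite /bx.
  case: (eqVneq (nth 0 (A i) k2) y) => [->|N2]; case: (eqVneq (nth 0 (A i) k1) y) => [->|N1] //=.
  by move=> _ /eqP -> /eqP ->.
Qed.

Lemma W1_inj i k1 k2 u : W1 i k1 u -> W1 i k2 u -> k1 = k2.
Proof.
  rewrite /W1 => /and4P [_ /eqP Ey1 /eqP Eo1 _] /and4P [_ /eqP Ey2 /eqP Eo2 _].
  apply: (occ_inj (s := A i)); by rewrite ?Ey1 ?Ey2 ?Eo1 ?Eo2.
Qed.

Lemma code_bound i k r : k < size (A i) -> r < 5 ->
  5 * track (nth 0 (A i) k) (occ (A i) k) + r < N.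
Proof.
  move=> Hk Hr; have H1 := occ_lt Hk; have H2 := count_size (pred1 (nth 0 (A i) k)) (A i).
  have H3 := size_nth_flatten a i; have H4 := bx_le (nth 0 (A i) k).
  rewrite /track /NC; move: H1 H2 H3 H4.
  set q := occ _ _; set cc := count _ _; set bb := bx _; set s1 := size (A i); set s2 := size _.
  clearbody q cc bb s1 s2; lia.
Qed.

Lemma wit_mem_i1 k : k < size (A i1) -> irel (rho2 (nth 0 (A i1) k)) (wit i1 k).
Proof.
  move=> Hk; rewrite /rho2 /wit.
  case Hyc: ((nth 0 (A i1) k == y) || (nth 0 (A i1) k == c)) => //=.
  have Ho := occ_lt Hk; have Hb r : r < 5 -> _ := code_bound Hk.
  move: Hyc Ho Hb; rewrite /Mem /W0 /W1 eqxx /=.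
  set x := nth 0 (A i1) k; set q := occ (A i1) k => Hyc Ho Hb.
  case: (eqVneq x y) => [Ey|Ny] /=; last first.
    have Ec : x == c by move: Hyc; rewrite (negbTE Ny).
    right; right; left; exists q; do 2 split => //.
    by rewrite indom_tp2_0 /= Ec eqxx /=; apply: Hb.
  have Hby : bx x = 0 by rewrite /bx Ey eqxx.
  right; right.
  case: (ltngtP q sg) => Hq.
  - right; split => //; have -> : 0 < sg by lia.
    left; exists q; split => //; rewrite indom_tp2_0 /track Hby addn0 mulnA eqxx /=.
    by have := Hb 4 isT; rewrite /track Hby addn0 mulnA.
  - left; exists q; do 2 split => //; first by rewrite -ltnNge.
    by rewrite indom_tp2_0 /= eqxx /=; apply: Hb.
  - right; split => //; case Hs: (0 < sg).
    + right; rewrite -[X in indom _ X]/(loc 4) indom_tp2_1 /= /NC; lia.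
    + move=> u Hu Hr; by rewrite indom_tp2_1 /= Hr Hu.
Qed.

Lemma wit_mem_other i k : i != i1 -> k < size (A i) -> irel (rho2 (nth 0 (A i) k)) (wit i k).
Proof.
  move=> Hi1 Hk; rewrite /rho2 /wit.
  case Hyc: ((nth 0 (A i) k == y) || (nth 0 (A i) k == c)) => //=.
  have Ho := occ_lt Hk; have Hb r : r < 5 -> _ := code_bound Hk.
  move: Hyc Ho Hb; rewrite /Mem /W0 (negbTE Hi1).
  set x := nth 0 (A i) k; set q := occ (A i) k => Hyc Ho Hb.
  rewrite Hyc; case: (eqVneq i i0) => [Ei|Ni0].
  - left; exists q; split; first by rewrite -Ei.
    by rewrite indom_tp2_0 /= eqxx /=; move: (Hb 0 isT); rewrite addn0.
  - right; left; exists q; rewrite !indom_tp2_0 /=.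
    by split; apply/andP; split; rewrite ?eqxx ?orbT //; apply: Hb.
Qed.

Lemma wit_mem i k : k < size (A i) -> irel (rho2 (nth 0 (A i) k)) (wit i k).
Proof. case: (eqVneq i i1) => [->|]; [exact: wit_mem_i1|exact: wit_mem_other]. Qed.

Lemma wit_pdisj i : pairwise_disj (map (wit i) (iota 0 (size (A i)))).
Proof.
  move=> k1 k2; rewrite size_map size_iota => H1 H2 Hne.
  rewrite !(nth_map 0) ?size_iota // !nth_iota // !add0n.
  apply: tp2_disj => u _ Ha Hb.
  - by move: Hne; rewrite (W0_inj Ha Hb) eqxx.
  - by move: Hne; rewrite (W1_inj Ha Hb) eqxx.
Qed.

(* witnesses use R-cells in conjunct i1 and Q-cells in conjunct i0, so they
   avoid the frame of their conjunct *)
Lemma wit_disj_frame i : i0 != i1 -> disj_from_all (frame i) (map (wit i) (iota 0 (size (A i)))).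
Proof.
  move=> H01 k; rewrite size_map size_iota => Hk.
  rewrite (nth_map 0) ?size_iota // nth_iota // add0n /frame /wit.
  case: (eqVneq i i0) => [Ei|Ni0].
  - apply: tp2_disj => u _ Hr.
    + rewrite /W0 Ei (negbTE H01) /= eqxx.
      case: (_ || _) => //= /eqP Eu; move: Hr; rewrite /Rp Eu; lia.
    + by rewrite /W1 Ei (negbTE H01).
  - case: (eqVneq i i1) => [Ei|Ni1]; last by apply: tp2_disj.
    apply: tp2_disj => u _ Hq.
    + rewrite /W0 Ei eqxx; move: Hq; rewrite /Qp.
      case: (_ == y); [case: (_ < sg); [|case: (_ == sg)]|case: (_ == c)] => //= Hq /eqP Eu;
        move: Hq; rewrite Eu; lia.
    + rewrite /W1 => /and4P [_ _ _]; move: Hq; rewrite /Qp /Rp.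
      case: (0 < sg) => /= Hq; [move/eqP => Eu; move: Hq; rewrite Eu|]; lia.
Qed.

Lemma frame_sem eta i : i < size a -> sem eta rho2 (nth ATrue (mkphis a i0 i1) i) (frame i).
Proof.
  move=> Hi; rewrite /mkphis nth_map_iota // /frame.
  case: (i == i0); [|case: (i == i1) => //].
  - apply: cells_intro; first exact: uniq_R.
    by move=> u; rewrite mem_Rcodes => /andP [Hr Hu] k; rewrite tp2_loc Hr Hu; case: (k == ord0).
  - apply: cells_intro; first exact: uniq_Q.
    by move=> u; rewrite mem_Qcodes => /andP [Hr Hu] k; rewrite tp2_loc Hr Hu; case: (k == ord0).
Qed.

Lemma lhs_bin eta : i0 != i1 -> sem eta rho2 (lhs (mkphis a i0 i1) a) (hM N).
Proof.
  move=> H01; apply/(lhs_sem _ _ _ (size_mkphis a i0 i1)) => i Hi.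
  apply: (star_vars_intro (ws := map (wit i) (iota 0 (size (A i)))) (frame_sem eta Hi)).
  - split; first by rewrite size_map size_iota.
    move=> k Hk; rewrite (nth_map 0) ?size_iota // nth_iota // add0n; exact: wit_mem.
  - exact: wit_pdisj.
  - exact: wit_disj_frame.
  - by rewrite /frame; case: (i == i0); [|case: (i == i1)]; apply: tp2_sub.
  - move=> k; rewrite size_map size_iota => Hk; rewrite (nth_map 0) ?size_iota //.
    exact: tp2_sub.
Qed.

(* A member of ρ(x) avoiding all R-cells must use a Q-cell 5·track x t of
   conjunct i0, and there are only Π(i0)(x) of those. *)
Lemma Mem_avoiding_R x w : tsub w (hM N) ->
  (forall u kk, u < N -> Rp u -> ~~ indom (w kk) (loc u)) ->
  Mem x w -> exists t, t < count_mem x (A i0) /\ indom (w ord0) (loc (5 * track x t)).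
Proof.
  move=> Hs HR.
  have noR kk u : indom (w kk) (loc u) -> Rp u -> False.
    by move=> Hi Hr; move/negP: (HR u kk (dom_hM Hs Hi) Hr).
  case=> [//|[[t [_ Hi]]|[[q [_ [_ Hi]]]|[_ H4]]]]; exfalso.
  - by apply: (noR _ _ Hi); rewrite /Rp; lia.
  - by apply: (noR _ _ Hi); rewrite /Rp; lia.
  - case: (0 < sg) H4 => [[[q [_ Hi]]|Hi]|Hall].
    + by apply: (noR _ _ Hi); rewrite /Rp; lia.
    + by apply: (noR _ _ Hi).
    + by apply: (noR o1 2) => //; apply: Hall => //; rewrite /NC; lia.
Qed.

Lemma Mem_avoiding_QS w : tsub w (hM N) ->
  (forall u kk, u < N -> Qp u -> ~~ indom (w kk) (loc u)) ->
  (if 0 < sg then forall q kk, q < sg -> ~~ indom (w kk) (loc (10 * q + 4))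
   else exists u, [/\ u < N, Rp u & ~~ indom (w o1) (loc u)]) ->
  Mem y w -> exists q, sg < q < count_mem y (A i1) /\ indom (w ord0) (loc (5 * track y q + 3)).
Proof.
  move=> Hs HQ HS.
  have noQ kk u : indom (w kk) (loc u) -> Qp u -> False.
    by move=> Hi Hq; move/negP: (HQ u kk (dom_hM Hs Hi) Hq).
  case=> [[t [_ Hi]]|[[t [Hi _]]|[[q [Hq [Hn Hi]]]|[_ H4]]]].
  - by exfalso; apply: (noQ _ _ Hi); rewrite /Qp; lia.
  - by exfalso; apply: (noQ _ _ Hi); rewrite /Qp; lia.
  - exists q; split => //; move: Hn; rewrite eqxx /= -ltnNge => Hsq; by rewrite Hsq Hq.
  - exfalso; move: HS H4; case Hsg: (0 < sg).
    + move=> HS [[q [Hq Hi]]|Hi]; first by move/negP: (HS q ord0 Hq).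
      by move/negP: (HS 0 o1 Hsg).
    + move=> [u [Hu Hr /negP Hni]] Hall; exact: Hni (Hall u Hu Hr).
Qed.

(* The disjunct j0 fails: the R-cells are all taken by the frame ψ_{j0}, so
   each c-witness needs its own Q-cell of conjunct i0 — too few of them. *)
Lemma j0_fails eta (bs : seq avar) : count_mem c (A i0) < count_mem c bs ->
  ~ sem eta rho2 (star_vars (phi_i0 a) bs) (hM N).
Proof.
  move=> Hc /star_vars_elim [g [ws [Hg [[Hsz Hirel] [Hpd [Had [Hgh Hws]]]]]]].
  have Hsize k : k \in pos bs c -> k < size ws by rewrite mem_pos Hsz => /andP [].
  move: Hc; rewrite ltnNge => /negP; apply.
  pose us := [seq 5 * track c t | t <- iota 0 (count_mem c (A i0))].
  have <- : size us = count_mem c (A i0) by rewrite size_map size_iota.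
  rewrite -size_pos; apply: (@disjoint_touching 2 ws ord0) => //; first exact: pos_uniq.
  move=> k Hk; have Hk' := Hsize k Hk.
  have HMem : Mem c (nth emp ws k).
    move: Hk; rewrite mem_pos => /andP [Hkb /eqP Ek].
    by have := Hirel k Hkb; rewrite Ek /rho2 eqxx orbT.
  have HR u kk : u < N -> Rp u -> ~~ indom (nth emp ws k kk) (loc u).
    move=> Hu Hr; apply: (tdisj_indom (Had k Hk')).
    by rewrite /indom (cells_elim Hg) // mem_Rcodes Hr Hu.
  have [t [Ht Hi]] := Mem_avoiding_R (Hws k Hk') HR HMem.
  apply/hasP; exists (5 * track c t) => //; apply: map_f; by rewrite mem_iota.
Qed.

Lemma Rp_Qp u : Rp u = ~~ Qp u.
Proof. by rewrite /Rp /Qp leqNgt. Qed.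

(* What the frame ψ_{j1} occupies in a sub-heap of hM: all Q-cells, and
   either the S-cells (sg > 0) or some R-cell of component 1 (sg = 0, the
   cell of [some_cell], which cannot be a Q-cell). *)
Lemma psi_j1_frame eta g : tsub g (hM N) -> sem eta rho2 (psi_j1 a sg) g ->
  (forall u kk, u < N -> Qp u -> indom (g kk) (loc u)) /\
  (if 0 < sg then forall q kk, q < sg -> indom (g kk) (loc (10 * q + 4))
   else exists u, [/\ u < N, Rp u & indom (g o1) (loc u)]).
Proof.
  move=> HgM; rewrite /psi_j1; case: (0 < sg) => Hg.
    split=> [u kk Hu HQ|q kk Hq]; rewrite /indom (cells_elim Hg) // mem_cat.
    - by rewrite mem_Qcodes HQ Hu.
    - by apply/orP; right; apply: map_f; rewrite mem_iota.
  case/star_elim: Hg => p [q [Hp [Hq [Hpq [Hpg Hqg]]]]].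
  have HQp u kk : u < N -> Qp u -> indom (p kk) (loc u).
    by move=> Hu HQ; rewrite /indom (cells_elim Hp) // mem_Qcodes HQ Hu.
  split=> [u kk Hu HQ|]; first exact: indom_sub (Hpg kk) (HQp u kk Hu HQ).
  have [l [v Hlv]] := some_cell_elim Hq.
  have Hql kk : indom (q kk) l by rewrite /indom Hlv.
  have [u0 Hu0 El] := dom_hM_loc (tsub_trans Hqg HgM) (Hql ord0).
  exists u0; split => //; last by apply: indom_sub (Hqg o1) _; rewrite -El.
  rewrite Rp_Qp; apply/negP => HQ0.
  by move/negP: (tdisj_indom Hpq (HQp u0 ord0 Hu0 HQ0)); rewrite -El.
Qed.

(* The disjunct j1 fails: ψ_{j1} takes the Q-cells and the cells needed by
   the y-witnesses of small occurrence number, so the Ω(j1)(y) y-witnesses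
   need distinct R-cells of occurrences sg < q < Π(i1)(y) — one too few. *)
Lemma j1_fails eta (bs : seq avar) : y \in bs ->
  sg = count_mem y (A i1) - count_mem y bs -> count_mem y bs <= count_mem y (A i1) ->
  ~ sem eta rho2 (star_vars (psi_j1 a sg) bs) (hM N).
Proof.
  move=> Hy Hsg Hle /star_vars_elim [g [ws [Hg [[Hsz Hirel] [Hpd [Had [Hgh Hws]]]]]]].
  have [HQg HSg] := psi_j1_frame Hgh Hg.
  have Hsize k : k \in pos bs y -> k < size ws by rewrite mem_pos Hsz => /andP [].
  have Hpos : 0 < count_mem y bs by rewrite -has_count has_pred1.
  suff : count_mem y bs <= count_mem y (A i1) - sg.+1 by lia.
  pose us := [seq 5 * track y q + 3 | q <- iota sg.+1 (count_mem y (A i1) - sg.+1)].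
  have <- : size us = count_mem y (A i1) - sg.+1 by rewrite size_map size_iota.
  rewrite -size_pos; apply: (@disjoint_touching 2 ws ord0) => //; first exact: pos_uniq.
  move=> k Hk; have Hk' := Hsize k Hk.
  have HMem : Mem y (nth emp ws k).
    move: Hk; rewrite mem_pos => /andP [Hkb /eqP Ek].
    by have := Hirel k Hkb; rewrite Ek /rho2 eqxx.
  have HQ u kk : u < N -> Qp u -> ~~ indom (nth emp ws k kk) (loc u).
    by move=> Hu HQu; apply: (tdisj_indom (Had k Hk')); apply: HQg.
  have HS : if 0 < sg then forall q kk, q < sg -> ~~ indom (nth emp ws k kk) (loc (10 * q + 4))
            else exists u, [/\ u < N, Rp u & ~~ indom (nth emp ws k o1) (loc u)].
    move: HSg; case: (0 < sg) => [HSg q kk Hq|[u [Hu Hr Hi]]].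
    - exact: tdisj_indom (Had k Hk') (HSg q kk Hq).
    - by exists u; split => //; apply: tdisj_indom (Had k Hk') Hi.
  have [q [Hq Hi]] := Mem_avoiding_QS (Hws k Hk') HQ HS HMem.
  apply/hasP; exists (5 * track y q + 3) => //; apply: map_f.
  rewrite mem_iota; move: Hq; lia.
Qed.

Lemma rhs_bin eta (b : seq (seq avar)) j0 j1 :
  j0 < size b -> j1 < size b -> j0 != j1 ->
  count_mem c (A i0) < count_mem c (nth [::] b j0) -> y \in nth [::] b j1 ->
  sg = count_mem y (A i1) - count_mem y (nth [::] b j1) ->
  count_mem y (nth [::] b j1) <= count_mem y (A i1) ->
  ~ sem eta rho2 (rhs (mkpsis a b j0 j1 sg) b) (hM N).
Proof.
  move=> Hj0 Hj1 Hj01 Hc Hy Hsg Hle /(rhs_sem _ _ _ (size_mkpsis a b j0 j1 sg)) [j [Hj]].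
  rewrite /mkpsis nth_map_iota //.
  case: (eqVneq j j0) => [->|_]; first exact: j0_fails.
  case: (eqVneq j j1) => [->|_]; first exact: j1_fails.
  by case/star_vars_elim => g [_ [Hg _]].
Qed.

End BinaryModel.

Lemma unary_valid a b i0 i1 j0 j1 sg :
  (forall j, j < size b -> forall x, x \in nth [::] b j -> x \in flatten a) ->
  i0 < size a -> i1 < size a -> i0 != i1 -> j0 < size b -> j1 < size b -> j0 != j1 ->
  Pi_ge_Omega a b i0 j1 -> Pi_ge_Omega a b i1 j0 -> Pi_ge_Omega a b i1 j1 ->
  sg <= size (flatten a) ->
  (forall x, x \in nth [::] b j1 ->
     sg <= count_mem x (nth [::] a i1) - count_mem x (nth [::] b j1)) ->
  valid_n 1 (lhs (mkphis a i0 i1) a) (rhs (mkpsis a b j0 j1 sg) b).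
Proof.
  move=> Hlay Hi0 Hi1 Hi01 Hj0 Hj1 Hj01 H01 H10 H11 Hsgb Hslack eta rho h.
  move/(lhs_sem _ _ _ (size_mkphis a i0 i1)) => H.
  have H0 := H i0 Hi0; rewrite /mkphis nth_map_iota // eqxx in H0.
  have H1 := H i1 Hi1; rewrite /mkphis nth_map_iota // eq_sym (negbTE Hi01) eqxx in H1.
  apply/(rhs_sem _ _ _ (size_mkpsis a b j0 j1 sg)).
  have E0 : nth AFalse (mkpsis a b j0 j1 sg) j0 = phi_i0 a by rewrite /mkpsis nth_map_iota // eqxx.
  have E1 : nth AFalse (mkpsis a b j0 j1 sg) j1 = psi_j1 a sg.
    by rewrite /mkpsis nth_map_iota // eq_sym (negbTE Hj01) eqxx.
  case: (posnP sg) => [Hz|Hpos].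
  - (* either the missing variables of b_{j0} admit the empty heap, or one
       of them forces a non-empty witness *)
    case: (classic (forall d, count_mem d (nth [::] a i0) < count_mem d (nth [::] b j0) ->
                              irel (rho d) (@temp 1))) => [Hpad|Hdef].
    + exists j0; rewrite E0; split => //; exact: star_vars_pad Hpad H0.
    + have [d Hd] := not_all_ex_not _ _ Hdef; have [Hlt Hne] := imply_to_and _ _ Hd.
      exists j1; rewrite E1 /psi_j1 Hz; split => //; exact: (unary_deficit Hlay Hj0 Hj1 H01 H10 H11 H1 Hlt Hne).
  - exists j1; rewrite E1 /psi_j1 Hpos; split => //; exact: (unary_slack Hlay Hj1 H11 H0 H1 Hpos Hsgb Hslack).
Qed.

Theorem mainTheorem13 (a b : seq (seq avar)) (i0 i1 j0 j1 : nat) :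
  (* layout: M = size a >= 1, N = size b, M_i = size (nth a i), N_j = size (nth b j) *)
  0 < size a ->
  (forall j, j < size b -> forall x, x \in nth [::] b j -> x \in flatten a) ->
  i0 < size a -> i1 < size a -> i0 <> i1 ->
  j0 < size b -> j1 < size b -> j0 <> j1 ->
  0 < size (nth [::] b j0) -> 0 < size (nth [::] b j1) ->
  ~ Pi_ge_Omega a b i0 j0 ->
  Pi_ge_Omega a b i0 j1 ->
  Pi_ge_Omega a b i1 j0 ->
  Pi_ge_Omega a b i1 j1 ->
  exists (phis psis : seq assn),
    size phis = size a /\ size psis = size b /\
    all no_avar phis /\ all no_avar psis /\
    valid_n 1 (lhs phis a) (rhs psis b) /\
    ~ valid_n 2 (lhs phis a) (rhs psis b).
Proof.
  move=> _ Hlay Hi0 Hi1 /eqP Hi01 Hj0 Hj1 /eqP Hj01 _ Hn1 Hnot H01 H10 H11.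
  have [c Hc] : exists c, count_mem c (nth [::] a i0) < count_mem c (nth [::] b j0).
    apply: NNPP => Hno; apply: Hnot => c _; rewrite leqNgt; apply/negP => H.
    by apply: Hno; exists c.
  have HB1 : nth [::] b j1 != [::] by case: (nth [::] b j1) Hn1.
  pose slack x := count_mem x (nth [::] a i1) - count_mem x (nth [::] b j1).
  have [y Hy Hmin] := seq_argmin slack HB1.
  have Hsgb : slack y <= size (flatten a).
    apply: leq_trans (leq_subr _ _) _; apply: leq_trans (count_size _ _) _.
    exact: size_nth_flatten.
  exists (mkphis a i0 i1), (mkpsis a b j0 j1 (slack y)).
  do 4 (split; first by rewrite ?size_mkphis ?size_mkpsis ?no_avar_mkphis ?no_avar_mkpsis).
  split; first exact: unary_valid.
  move=> Hv; apply: (rhs_bin (eta := fun _ => 0%Z) (c := c) Hj0 Hj1 Hj01 Hc Hy) => //.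
  - exact: H11 (Hlay _ Hj1 _ Hy).
  - exact: Hv _ _ _ (lhs_bin a c y (slack y) _ Hi01).
Qed.
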